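(* Let $a,b\in\mathbb{O}$ have norm one and let $\Phi:\mathbb{O}\to\mathbb{O}$ be a linear map. The following are equivalent: (1) $\Phi$ is an automorphism of $\mathbb{O}$ with $\Phi(a)=b$; (2) $\Phi$ is an algebra isomorphism from ${}^*\mathbb{O}_l(a,1)$ onto ${}^*\mathbb{O}_l(b,1)$ with $\Phi(1)=1$.
   Context: $\mathbb{O}$ is the real octonion algebra with conjugation $x\mapsto\bar x$. For norm-one $a\in\mathbb{O}$, ${}^*\mathbb{O}_l(a,1)$ is the normed space of $\mathbb{O}$ with product $x\odot y=(\bar x a)y$; it is an absolute-valued algebra with left unit $a$. *)

(* Real octonions O = R^8 with the standard Fano-plane
   multiplication table (e_i e_{i+1} = e_{i+3}, indices 1..7 mod 7). *)
From HB Require Import structures.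
From mathcomp Require Import all_boot all_order all_algebra.
From mathcomp Require Import reals.
Set Implicit Arguments. Unset Strict Implicit. Unset Printing Implicit Defensive.
Import Order.TTheory GRing.Theory Num.Theory.
Local Open Scope ring_scope.

Notation oct R := 'rV[R]_8.

Definition obasis (R : realType) (k : 'I_8) : oct R := delta_mx 0 k.

(* For 1 <= i, j <= 7, i <> j, let d = (j - i) mod 7; then
   d=1: e_{i+3}, d=2: e_{i+6}, d=4: e_{i+5},
   d=6: -e_{i+2}, d=5: -e_{i+4}, d=3: -e_{i+1}  (indices in 1..7 mod 7). *)
Definition tdiff (i j : nat) : nat := (j + 7 - i) %% 7.
Definition toff (d : nat) : nat :=
  match d with 1 => 3 | 2 => 6 | 4 => 5 | 6 => 2 | 5 => 4 | 3 => 1 | _ => 0 end.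
Definition tidx_nat (i j : nat) : nat :=
  if i == 0 then j else if j == 0 then i else if i == j then 0
  else ((i - 1 + toff (tdiff i j)) %% 7).+1.
Definition tsign (R : realType) (i j : nat) : R :=
  if i == 0 then 1 else if j == 0 then 1 else if i == j then -1
  else if tdiff i j \in [:: 1; 2; 4]%N then 1 else -1.
Definition tidx (i j : 'I_8) : 'I_8 := inord (tidx_nat i j).

Definition omul (R : realType) (x y : oct R) : oct R :=
  \sum_(i < 8) \sum_(j < 8)
     (x 0 i * y 0 j * tsign R i j) *: obasis R (tidx i j).

Definition oone (R : realType) : oct R := obasis R 0.

Definition oconj (R : realType) (x : oct R) : oct R :=
  \row_i (if i == 0 :> 'I_8 then x 0 i else - x 0 i).

Definition onorm (R : realType) (x : oct R) : R :=
  Num.sqrt (\sum_(i < 8) x 0 i ^+ 2).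

(* The product of *O_l(a,1):  x (.) y = (xbar a) y *)
Definition omul_la (R : realType) (a : oct R) (x y : oct R) : oct R :=
  omul (omul (oconj x) a) y.

Definition oct_automorphism (R : realType) (Phi : {linear oct R -> oct R}) : Prop :=
  bijective Phi /\ forall x y, Phi (omul x y) = omul (Phi x) (Phi y).

Definition starOl_isomorphism (R : realType) (a b : oct R)
    (Phi : {linear oct R -> oct R}) : Prop :=
  bijective Phi /\ forall x y, Phi (omul_la a x y) = omul_la b (Phi x) (Phi y).

From HB Require Import structures.
From mathcomp Require Import all_boot all_order all_algebra.
From mathcomp Require Import reals.
From mathcomp Require Import ring lra.
Import Order.TTheory GRing.Theory Num.Theory.
Local Open Scope ring_scope.
Set Implicit Arguments. Unset Strict Implicit. Unset Printing Implicit Defensive.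

(* An automorphism [f] fixes 1 and sends a purely imaginary [v] to a purely
   imaginary octonion, because [f v] squares to the nonpositive real [v * v];
   so [f] preserves real parts, commutes with [x |-> xbar], and hence carries
   [(xbar a) y] to [(f(x)bar f(a)) f(y)].  Conversely, taking [x = 1] and then
   [y = 1] in the isomorphism property gives [f a = b] and
   [f (xbar a) = f(x)bar b]; since [|a| = 1], every [z] is [xbar a] with
   [x = conj (z abar)], whence [f (z y) = f z * f y]. *)

Section OctonionCoordinates.
Variable R : realType.
Implicit Types x y z : oct R.

Definition ore x : R := x 0 0.

Definition osqnorm x : R := \sum_(i < 8) x 0 i ^+ 2.

(* The multiplication table written out coordinatewise (see [omulE]), so that
   octonion identities reduce to [ring] on the eight coordinates. *)
Definition omul_table x y (k : nat) : R :=
  let x i := x 0 (inord i) in let y j := y 0 (inord j) in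
  match k with
  | 0 => x 0 * y 0 - x 1 * y 1 - x 2 * y 2 - x 3 * y 3 - x 4 * y 4 - x 5 * y 5 - x 6 * y 6 - x 7 * y 7
  | 1 => x 0 * y 1 + x 1 * y 0 + x 2 * y 4 + x 3 * y 7 - x 4 * y 2 + x 5 * y 6 - x 6 * y 5 - x 7 * y 3
  | 2 => x 0 * y 2 - x 1 * y 4 + x 2 * y 0 + x 3 * y 5 + x 4 * y 1 - x 5 * y 3 + x 6 * y 7 - x 7 * y 6
  | 3 => x 0 * y 3 - x 1 * y 7 - x 2 * y 5 + x 3 * y 0 + x 4 * y 6 + x 5 * y 2 - x 6 * y 4 + x 7 * y 1
  | 4 => x 0 * y 4 + x 1 * y 2 - x 2 * y 1 - x 3 * y 6 + x 4 * y 0 + x 5 * y 7 + x 6 * y 3 - x 7 * y 5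
  | 5 => x 0 * y 5 - x 1 * y 6 + x 2 * y 3 - x 3 * y 2 - x 4 * y 7 + x 5 * y 0 + x 6 * y 1 + x 7 * y 4
  | 6 => x 0 * y 6 + x 1 * y 5 - x 2 * y 7 + x 3 * y 4 - x 4 * y 3 - x 5 * y 1 + x 6 * y 0 + x 7 * y 2
  | _ => x 0 * y 7 + x 1 * y 3 + x 2 * y 6 - x 3 * y 1 + x 4 * y 5 - x 5 * y 4 - x 6 * y 2 + x 7 * y 0
  end.

Lemma tidx_nat_lt8 i j : (i < 8)%N -> (j < 8)%N -> (tidx_nat i j < 8)%N.
Proof.
move=> lti ltj; rewrite /tidx_nat.
by do 3 case: eqP => // _; rewrite ltnS ltn_mod.
Qed.

Lemma big_ord8 (F : 'I_8 -> R) : \sum_(i < 8) F i = \sum_(0 <= i < 8) F (inord i).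
Proof. by rewrite big_mkord; apply: eq_bigr => i _; rewrite inord_val. Qed.

Lemma omul_coord x y k :
  omul x y 0 k =
  \sum_(i < 8) \sum_(j < 8) (if tidx i j == k then x 0 i * y 0 j * tsign R i j else 0).
Proof.
rewrite summxE; apply: eq_bigr => i _; rewrite summxE; apply: eq_bigr => j _.
by rewrite !mxE eqxx eq_sym; case: eqP; rewrite ?mulr1 ?mulr0.
Qed.

Lemma omulE x y k : (k < 8)%N -> omul x y 0 (inord k) = omul_table x y k.
Proof.
move=> ltk; rewrite omul_coord big_ord8.
under eq_big_nat => i /andP[_ lti].
  rewrite big_ord8; under eq_big_nat => j /andP[_ ltj].
    rewrite /tidx !inordK // -val_eqE /= !inordK ?tidx_nat_lt8 //.
  over.
over.
move: k ltk; do 8 (case; first by move=> _; rewrite !big_nat_recl // !big_geq //= /tsign /=; ring).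
by [].
Qed.

Lemma oct_inord_ext x y :
  (forall k, (k < 8)%N -> x 0 (inord k) = y 0 (inord k)) -> x = y.
Proof. by move=> exy; apply/rowP => i; rewrite -(inord_val i); apply: exy. Qed.

Lemma oreE x : ore x = x 0 (inord 0).
Proof. by congr (x 0 _); apply: val_inj; rewrite /= inordK. Qed.

Lemma osqnormE x : osqnorm x = \sum_(0 <= i < 8) x 0 (inord i) ^+ 2.
Proof. exact: big_ord8. Qed.

Lemma oct_addE x y k : (x + y) 0 k = x 0 k + y 0 k.
Proof. by rewrite mxE. Qed.

Lemma oct_subE x y k : (x - y) 0 k = x 0 k - y 0 k.
Proof. by rewrite !mxE. Qed.

Lemma oct_scaleE (c : R) x k : (c *: x) 0 k = c * x 0 k.
Proof. by rewrite mxE. Qed.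

Lemma oreD x y : ore (x + y) = ore x + ore y.
Proof. exact: oct_addE. Qed.

Lemma oreB x y : ore (x - y) = ore x - ore y.
Proof. exact: oct_subE. Qed.

Lemma oreZ (c : R) x : ore (c *: x) = c * ore x.
Proof. exact: oct_scaleE. Qed.

Lemma ore_oone : ore (oone R) = 1.
Proof. by rewrite /ore mxE. Qed.

Lemma oconjE x k : (k < 8)%N ->
  oconj x 0 (inord k) = if k == 0%N then x 0 (inord k) else - x 0 (inord k).
Proof. by move=> ltk; rewrite mxE -val_eqE /= inordK. Qed.

Lemma ooneE k : (k < 8)%N -> oone R 0 (inord k) = if k == 0%N then 1 else 0.
Proof. by move=> ltk; rewrite mxE eqxx -val_eqE /= inordK //; case: eqP. Qed.

Ltac oct_ring := apply: oct_inord_ext;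
  do 8 (case; first by move=> _;
    rewrite ?osqnormE ?big_nat_recl // ?big_geq // ?oct_scaleE ?oct_subE
      ?omulE // /omul_table /= ?omulE // /omul_table /=
      ?oct_scaleE ?oct_subE ?oconjE ?ooneE ?oreE //=; ring);
  by [].

Lemma omul1o x : omul (oone R) x = x.
Proof. oct_ring. Qed.

Lemma omulo1 x : omul x (oone R) = x.
Proof. oct_ring. Qed.

Lemma oconj1 : oconj (oone R) = oone R.
Proof. oct_ring. Qed.

Lemma oconjK : involutive (@oconj R).
Proof. move=> x; oct_ring. Qed.

Lemma oconj_ore x : oconj x = (2 * ore x) *: oone R - x.
Proof. oct_ring. Qed.

Lemma omul_sqr x : omul x x = (2 * ore x) *: x - osqnorm x *: oone R.
Proof. oct_ring. Qed.

Lemma omul_conjK x z : omul (omul z (oconj x)) x = osqnorm x *: z.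
Proof. oct_ring. Qed.

Lemma osqnorm_ge0 x : 0 <= osqnorm x.
Proof. by apply: sumr_ge0 => i _; apply: sqr_ge0. Qed.

Lemma osqnorm_onorm x : osqnorm x = onorm x ^+ 2.
Proof. by rewrite sqr_sqrtr ?osqnorm_ge0. Qed.

(* If [x] were not purely imaginary, [x * x] being real would force all
   imaginary coordinates of [x] to vanish, and then [ore x ^+ 2 = c <= 0]. *)
Lemma ore_sqr_nonpos x c : c <= 0 -> omul x x = c *: oone R -> ore x = 0.
Proof.
move=> c_le0 xx_c.
have coord k : (k < 8)%N -> omul x x 0 (inord k) = (c *: oone R) 0 (inord k).
  by rewrite xx_c.
move: (coord 0%N isT) (coord 1%N isT) (coord 2%N isT) (coord 3%N isT)
  (coord 4%N isT) (coord 5%N isT) (coord 6%N isT) (coord 7%N isT).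
rewrite !omulE // !oct_scaleE !ooneE //= mulr1 !mulr0 oreE.
set x0 := x 0 (inord 0) => e0 e1 e2 e3 e4 e5 e6 e7.
have x0_4_le0 : x0 ^+ 4 <= 0 by nra.
have : x0 ^+ 4 == 0 by rewrite eq_le x0_4_le0 exprn_even_ge0.
by rewrite expf_eq0 => /andP[_ /eqP].
Qed.

End OctonionCoordinates.

Section Automorphisms.
Variable R : realType.
Implicit Types a b x y : oct R.

Lemma omorph_oone (f g : oct R -> oct R) :
  {morph f : x y / omul x y} -> cancel g f -> f (oone R) = oone R.
Proof.
move=> fM gK.
by rewrite -[RHS](gK (oone R)) -[in RHS](omul1o (g _)) fM gK omulo1.
Qed.

Lemma omorph_ore (f : {linear oct R -> oct R}) :
  {morph f : x y / omul x y} -> f (oone R) = oone R ->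
  forall x, ore (f x) = ore x.
Proof.
move=> fM f1 x.
pose v := x - ore x *: oone R.
have v_re0 : ore v = 0 by rewrite oreB oreZ ore_oone mulr1 subrr.
have fv_sqr : omul (f v) (f v) = (- osqnorm v) *: oone R.
  by rewrite -fM omul_sqr v_re0 mulr0 scale0r sub0r linearN linearZ f1 scaleNr.
have fv_re0 : ore (f v) = 0.
  by apply: ore_sqr_nonpos fv_sqr; rewrite oppr_le0 osqnorm_ge0.
have x_eq : x = v + ore x *: oone R by rewrite subrK.
clearbody v.
by rewrite {1}x_eq linearD linearZ f1 oreD oreZ ore_oone fv_re0 add0r mulr1.
Qed.

Lemma omorph_oconj (f : {linear oct R -> oct R}) :
  {morph f : x y / omul x y} -> f (oone R) = oone R ->
  {morph f : x / oconj x}.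
Proof.
move=> fM f1 x.
by rewrite !oconj_ore linearB linearZ f1 (omorph_ore fM f1).
Qed.

Lemma omorph_omul_la (f : {linear oct R -> oct R}) a :
  {morph f : x y / omul x y} -> f (oone R) = oone R ->
  forall x y, f (omul_la a x y) = omul_la (f a) (f x) (f y).
Proof. by move=> fM f1 x y; rewrite /omul_la !fM (omorph_oconj fM f1). Qed.

End Automorphisms.

Section StarOlIsomorphisms.
Variables (R : realType) (a b : oct R) (f : oct R -> oct R).
Hypotheses (fM : forall x y, f (omul_la a x y) = omul_la b (f x) (f y))
           (f1 : f (oone R) = oone R).

Lemma starOl_morph_lmul y : f (omul a y) = omul b (f y).
Proof. by have := fM (oone R) y; rewrite /omul_la f1 oconj1 !omul1o. Qed.

Lemma starOl_morph_left_unit : f a = b.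
Proof. by have := starOl_morph_lmul (oone R); rewrite f1 !omulo1. Qed.

Lemma starOl_morph_omul_conj x : f (omul (oconj x) a) = omul (oconj (f x)) b.
Proof. by have := fM x (oone R); rewrite /omul_la f1 !omulo1. Qed.

Lemma starOl_morph_omul : osqnorm a = 1 -> {morph f : x y / omul x y}.
Proof.
move=> a_unit z y.
have z_eq : omul (oconj (oconj (omul z (oconj a)))) a = z.
  by rewrite oconjK omul_conjK a_unit scale1r.
by rewrite -[in LHS]z_eq fM /omul_la -starOl_morph_omul_conj z_eq.
Qed.

End StarOlIsomorphisms.

Theorem proposition4 (R : realType) (a b : oct R)
  (ha : onorm a = 1) (hb : onorm b = 1) (Phi : {linear oct R -> oct R}) :
  (oct_automorphism Phi /\ Phi a = b) <->
  (starOl_isomorphism a b Phi /\ Phi (oone R) = oone R).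
Proof.
split.
- move=> [[Phi_bij PhiM] Phi_ab].
  have [Psi _ PsiK] := Phi_bij.
  have Phi1 := omorph_oone PhiM PsiK.
  split=> //; split=> // x y.
  by rewrite -Phi_ab omorph_omul_la.
- move=> [[Phi_bij PhiM] Phi1].
  have a_unit : osqnorm a = 1 by rewrite osqnorm_onorm ha expr1n.
  split; last exact: starOl_morph_left_unit PhiM Phi1.
  by split=> //; apply: starOl_morph_omul.
Qed.
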